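(* Let $M$ and $N$ be monoids and let $M\ast N$ be their monoid free product. Then $M\ast N$ is $U(\mathrm{CF})$ if and only if both $M$ and $N$ are $U(\mathrm{CF})$.
   Context: For a monoid $M$ generated by a finite set $A$, $\mathrm{WP}(M,A)=\{u\#v^{\mathrm{rev}} : u,v\in A^*,\ u=_M v\}$, where $\#\notin A$ and $v^{\mathrm{rev}}$ is the reversal of $v$. A monoid is $U(\mathrm{CF})$ if it is finitely generated (as a monoid) and its word problem with respect to some (equivalently any) finite generating set is context-free. *)

From Stdlib Require List.
From mathcomp Require Import all_boot.
Set Implicit Arguments. Unset Strict Implicit. Unset Printing Implicit Defensive.

Record monoidT := {
  mcar :> Type;
  mop : mcar -> mcar -> mcar;
  munit : mcar;
  massoc : forall x y z, mop x (mop y z) = mop (mop x y) z;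
  munitl : forall x, mop munit x = x;
  munitr : forall x, mop x munit = x }.

Definition is_hom (M N : monoidT) (f : M -> N) : Prop :=
  f (munit M) = munit N /\ forall x y, f (mop x y) = mop (f x) (f y).

Definition is_free_product (M N P : monoidT) (iM : M -> P) (iN : N -> P) : Prop :=
  is_hom iM /\ is_hom iN /\
  forall (Q : monoidT) (f : M -> Q) (g : N -> Q), is_hom f -> is_hom g ->
    (exists h : P -> Q, is_hom h /\ (forall x, h (iM x) = f x)
                                 /\ (forall y, h (iN y) = g y)) /\
    (forall h1 h2 : P -> Q, is_hom h1 -> is_hom h2 ->
       (forall x, h1 (iM x) = f x) -> (forall y, h1 (iN y) = g y) ->
       (forall x, h2 (iM x) = f x) -> (forall y, h2 (iN y) = g y) ->
       forall p, h1 p = h2 p).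

Record CFG (T : Type) := {
  cfg_V : finType;
  cfg_start : cfg_V;
  cfg_rules : seq (cfg_V * seq (cfg_V + T)) }.

Inductive cfg_step (T : Type) (G : CFG T) : seq (cfg_V G + T) -> seq (cfg_V G + T) -> Prop :=
  | CfgStep : forall (u v rhs : seq (cfg_V G + T)) (X : cfg_V G),
      List.In (X, rhs) (cfg_rules G) ->
      cfg_step (u ++ inl X :: v) (u ++ rhs ++ v).

Inductive cfg_derives (T : Type) (G : CFG T) : seq (cfg_V G + T) -> seq (cfg_V G + T) -> Prop :=
  | CfgRefl : forall s, cfg_derives s s
  | CfgTrans : forall s t r, cfg_step s t -> cfg_derives t r -> cfg_derives s r.

Definition cfg_lang (T : Type) (G : CFG T) (w : seq T) : Prop :=
  @cfg_derives T G [:: inl (cfg_start G)] (map inr w).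

Definition context_free (T : finType) (L : seq T -> Prop) : Prop :=
  exists G : CFG T, forall w, cfg_lang G w <-> L w.

Definition meval (M : monoidT) (A : Type) (gen : A -> M) (w : seq A) : M :=
  foldr (fun a x => mop (gen a) x) (munit M) w.

Definition generates (M : monoidT) (A : Type) (gen : A -> M) : Prop :=
  forall x : M, exists w : seq A, meval gen w = x.

(* WP(M,A) = { u # v^rev : u = v in M }, over the alphabet option A,
   where Some a is the letter a and None is the new symbol # *)
Definition word_problem (M : monoidT) (A : Type) (gen : A -> M) (s : seq (option A)) : Prop :=
  exists u v : seq A, s = map Some u ++ None :: rev (map Some v) /\ meval gen u = meval gen v.

Definition UCF (M : monoidT) : Prop :=
  exists (A : finType) (gen : A -> M), generates gen /\ context_free (word_problem gen).

From Stdlib Require Import ClassicalEpsilon FunctionalExtensionality ProofIrrelevance.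
From mathcomp Require Import all_boot.
Set Implicit Arguments. Unset Strict Implicit. Unset Printing Implicit Defensive.

(* Languages: context-free languages are handled through least solutions
   [lfp K] of systems of language equations, a grammar being the system of
   its productions.

   (=>) A free factor [M] is a retract of [M * N].  Spelling its generators
   as words over generators of [M * N], [WP(M)] is the image of an inverse
   homomorphic image of [WP(M * N)] under a two-phase homomorphism, which
   also checks on which side of the marker each letter lies.

   (<=) Acting on normal forms (sequences of nonunit syllables from
   alternating factors), two words are equal in [M * N] iff they decompose
   into equal syllables separated by trivial words.  These certificates form
   a system of equations whose basic languages are homomorphic images of
   [WP(M)] and [WP(N)], so [WP(M * N)] is context-free. *)

Lemma mem_In (T : eqType) (x : T) (s : seq T) : x \in s <-> List.In x s.
Proof.
elim: s => [|y s IH] //=; rewrite in_cons; split.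
- by case/orP => [/eqP->|/IH]; [left|right].
- by case=> [->|/IH->]; rewrite ?eqxx ?orbT.
Qed.

Section Yields.
Variables (J T : Type).

Inductive yields (P : J -> seq T -> Prop) : seq (J + T) -> seq T -> Prop :=
| YieldsNil : yields P [::] [::]
| YieldsTerm t s w : yields P s w -> yields P (inr t :: s) (t :: w)
| YieldsNonterm j s u w : P j u -> yields P s w -> yields P (inl j :: s) (u ++ w).

Lemma yields_mono (P Q : J -> seq T -> Prop) s w :
  (forall j u, P j u -> Q j u) -> yields P s w -> yields Q s w.
Proof. by move=> PQ; elim=> *; constructor; auto. Qed.

Lemma yields_nil P w : yields P [::] w -> w = [::].
Proof. by move=> h; inversion h. Qed.

Lemma yields_term P t s w : yields P (inr t :: s) w ->
  exists w', w = t :: w' /\ yields P s w'.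
Proof. by move=> h; inversion h; subst; exists w0. Qed.

Lemma yields_nonterm P j s w : yields P (inl j :: s) w ->
  exists u w', w = u ++ w' /\ P j u /\ yields P s w'.
Proof. by move=> h; inversion h; subst; exists u, w0. Qed.

Lemma yields_cat P s1 s2 w : yields P (s1 ++ s2) w <->
  exists w1 w2, w = w1 ++ w2 /\ yields P s1 w1 /\ yields P s2 w2.
Proof.
split.
- elim: s1 w => [|[j|t] s1 IH] w /= h; first by exists [::], w; do !split=> //; constructor.
    have [u [w' [-> [hu /IH [w1 [w2 [-> [h1 h2]]]]]]]] := yields_nonterm h.
    by exists (u ++ w1), w2; rewrite catA; do !split=> //; constructor.
  have [w' [-> /IH [w1 [w2 [-> [h1 h2]]]]]] := yields_term h.
  by exists (t :: w1), w2; do !split=> //; constructor.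
- case=> w1 [w2 [-> [h1 h2]]].
  elim: h1 => {s1 w1} //= [t s u _ IH|j s u1 u2 hj _ IH]; first by constructor.
  by rewrite -catA; constructor.
Qed.

Lemma yields_terms P (x w : seq T) : yields P (map inr x) w <-> w = x.
Proof.
split=> [|->]; last by elim: x => [|t x IH] /=; constructor.
elim: x w => [|t x IH] w /= h; first exact: yields_nil h.
by have [w' [-> /IH ->]] := yields_term h.
Qed.

Definition lfp (K : J -> seq (J + T) -> Prop) (j : J) (w : seq T) : Prop :=
  forall P : J -> seq T -> Prop,
    (forall j s w, K j s -> yields P s w -> P j w) -> P j w.

Lemma lfp_ind K (P : J -> seq T -> Prop) :
  (forall j s w, K j s -> yields P s w -> P j w) -> forall j w, lfp K j w -> P j w.
Proof. by move=> cl j w h; apply: h cl. Qed.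

Lemma lfp_closed K j s w : K j s -> yields (lfp K) s w -> lfp K j w.
Proof.
move=> hs hw P cl; apply: (cl _ _ _ hs).
by apply: yields_mono hw => j' u; apply.
Qed.

Lemma lfp_unfold K j w : lfp K j w <-> exists s, K j s /\ yields (lfp K) s w.
Proof.
split=> [|[s [hs hw]]]; last exact: lfp_closed hs hw.
move: j w; apply: (@lfp_ind K (fun j w => exists s, K j s /\ yields (lfp K) s w)).
move=> j s w hs hw; exists s; split=> //.
by apply: yields_mono hw => j' u [s' [hs' hw']]; apply: lfp_closed hs' hw'.
Qed.

Lemma lfp_terminal K j (L : seq T -> Prop) :
  (forall s, K j s <-> exists x, L x /\ s = map inr x) ->
  forall w, lfp K j w <-> L w.
Proof.
move=> hK w; rewrite lfp_unfold; split.
- by case=> s [/hK [x [hx ->]] /yields_terms ->].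
- by move=> hw; exists (map inr w); split; [apply/hK; exists w|apply/yields_terms].
Qed.
End Yields.

Section Grammar.
Variables (T : finType) (G : CFG T).

Definition rules_of (X : cfg_V G) (rhs : seq (cfg_V G + T)) : Prop :=
  (X, rhs) \in cfg_rules G.

Lemma derives_ctx (u v s t : seq (cfg_V G + T)) :
  cfg_derives s t -> cfg_derives (u ++ s ++ v) (u ++ t ++ v).
Proof.
elim=> [s0|s0 t0 r [u' v' rhs X hin] _ IH]; first exact: CfgRefl.
apply: CfgTrans IH.
have -> : u ++ (u' ++ inl X :: v') ++ v = (u ++ u') ++ inl X :: (v' ++ v).
  by rewrite !catA -catA.
have -> : u ++ (u' ++ rhs ++ v') ++ v = (u ++ u') ++ rhs ++ (v' ++ v).
  by rewrite !catA.
exact: CfgStep.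
Qed.

Lemma derives_trans (s t r : seq (cfg_V G + T)) :
  cfg_derives s t -> cfg_derives t r -> cfg_derives s r.
Proof. by elim=> // s0 t0 r0 st _ IH h; apply: CfgTrans st (IH h). Qed.

Lemma yields_derives (P : cfg_V G -> seq T -> Prop) s w :
  (forall X u, P X u -> cfg_derives [:: inl X] (map inr u)) ->
  yields P s w -> cfg_derives s (map inr w).
Proof.
move=> hP; elim=> [|t s0 w0 _ IH|X s0 u w0 hu _ IH]; first exact: CfgRefl.
- by have := derives_ctx [:: inr t] [::] IH; rewrite /= !cats0.
- rewrite map_cat; apply: (@derives_trans _ (map inr u ++ s0)).
    by have := derives_ctx [::] s0 (hP _ _ hu).
  by have := derives_ctx (map inr u) [::] IH; rewrite !cats0.
Qed.

Lemma derives_yields s w :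
  cfg_derives s (map inr w) -> yields (lfp rules_of) s w.
Proof.
move Ew: (map inr w) => t h; elim: h w Ew => [s0|s0 t0 r [u v rhs X hin] _ IH] w Ew.
  by subst; apply/yields_terms.
have [w1 [w23 [-> [h1 /yields_cat [w2 [w3 [-> [h2 h3]]]]]]]] := (yields_cat _ _ _ _).1 (IH _ Ew).
apply/yields_cat; exists w1, (w2 ++ w3); do !split=> //.
constructor=> //; apply: (lfp_closed _ h2); exact/mem_In.
Qed.

Lemma cfg_lang_lfp w : cfg_lang G w <-> lfp rules_of (cfg_start G) w.
Proof.
split.
- move=> /derives_yields h.
  by have [u [w' [-> [hu /yields_nil ->]]]] := yields_nonterm h; rewrite cats0.
- move=> hw; apply: (@yields_derives (lfp rules_of)); last first.
    by rewrite -(cats0 w); constructor=> //; constructor.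
  move=> {hw}; apply: lfp_ind => Y rhs v /mem_In hin hv.
  apply: CfgTrans (CfgStep [::] [::] hin) _; rewrite /= cats0.
  exact: yields_derives hv.
Qed.
End Grammar.
Arguments rules_of {T} G X rhs.

Lemma cf_lfpP (T : finType) (L : seq T -> Prop) :
  context_free L <-> exists G : CFG T, forall w, lfp (rules_of G) (cfg_start G) w <-> L w.
Proof.
by split; case=> G h; exists G => w; rewrite -h; [symmetry|]; apply: cfg_lang_lfp.
Qed.

Lemma cf_ext (T : finType) (L1 L2 : seq T -> Prop) :
  (forall w, L1 w <-> L2 w) -> context_free L1 -> context_free L2.
Proof. by move=> e [G h]; exists G => w; rewrite h. Qed.

Lemma yields_rev (J T : Type) (P Q : J -> seq T -> Prop) s w :
  (forall j u, P j u -> Q j (rev u)) -> yields P s w -> yields Q (rev s) (rev w).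
Proof.
move=> PQ; elim=> [|t s0 w0 _ IH|j s0 u w0 hu _ IH]; first exact: YieldsNil.
- rewrite !rev_cons -!cats1; apply/yields_cat; exists (rev w0), [:: t].
  by do !split=> //; do !constructor.
- rewrite rev_cons rev_cat -cats1; apply/yields_cat; exists (rev w0), (rev u).
  by do !split=> //; rewrite -[rev u]cats0; do !constructor; apply: PQ.
Qed.

Lemma lfp_rev (J T : Type) (K K' : J -> seq (J + T) -> Prop) :
  (forall j s, K j s -> K' j (rev s)) -> forall j w, lfp K j w -> lfp K' j (rev w).
Proof.
move=> hK; apply: lfp_ind => j s w hs hw.
by apply: lfp_closed (hK _ _ hs) _; apply: yields_rev hw.
Qed.

Definition rev_cfg (T : finType) (G : CFG T) : CFG T :=
  {| cfg_V := cfg_V G; cfg_start := cfg_start G;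
     cfg_rules := [seq (r.1, rev r.2) | r <- cfg_rules G] |}.

Lemma rules_rev_cfg (T : finType) (G : CFG T) X rhs :
  rules_of (rev_cfg G) X rhs <-> rules_of G X (rev rhs).
Proof.
rewrite /rules_of /=; split=> [/mapP [[Y s] h [-> ->]]|h]; first by rewrite revK.
by apply/mapP; exists (X, rev rhs); rewrite ?revK.
Qed.

Lemma cf_rev (T : finType) (L : seq T -> Prop) :
  context_free L -> context_free (fun w => L (rev w)).
Proof.
case/cf_lfpP=> G h; apply/cf_lfpP; exists (rev_cfg G) => w; rewrite -h; split.
- by apply: lfp_rev => X s /rules_rev_cfg.
- rewrite -{2}(revK w); apply: lfp_rev => X s hs.
  by apply/rules_rev_cfg; rewrite revK.
Qed.

Definition finite_cfg (T : finType) (ws : seq (seq T)) : CFG T :=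
  {| cfg_V := unit; cfg_start := tt; cfg_rules := [seq (tt, map inr w) | w <- ws] |}.

Lemma cf_finite (T : finType) (ws : seq (seq T)) : context_free (fun w => w \in ws).
Proof.
apply/cf_lfpP; exists (finite_cfg ws); apply: lfp_terminal => s.
rewrite /rules_of /=; split=> [/mapP [w hw [->]]|[w [hw ->]]]; first by exists w.
by apply/mapP; exists w.
Qed.

Section Transducer.
Variables (T1 T2 Q : finType) (tr : Q -> T1 -> seq (Q * seq T2)).

(* A nondeterministic finite transducer: [tr q t] lists the possible pairs
   (next state, output) on reading [t] in state [q].  [runs q k w q']: reading
   [k] from [q], it may output [w] and stop in [q']. *)
Inductive runs : Q -> seq T1 -> seq T2 -> Q -> Prop :=
| RunNil q : runs q [::] [::] q
| RunCons q t k q1 o w q' :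
    (q1, o) \in tr q t -> runs q1 k w q' -> runs q (t :: k) (o ++ w) q'.

Lemma runs_nil q w q' : runs q [::] w q' -> w = [::] /\ q' = q.
Proof. by move=> h; inversion h. Qed.

Lemma runs_cons q t k w q' : runs q (t :: k) w q' ->
  exists q1 o w1, (q1, o) \in tr q t /\ runs q1 k w1 q' /\ w = o ++ w1.
Proof. by move=> h; inversion h; subst; exists q1, o, w0. Qed.

Lemma runs_cat q k1 k2 w q' : runs q (k1 ++ k2) w q' <->
  exists q1 w1 w2, w = w1 ++ w2 /\ runs q k1 w1 q1 /\ runs q1 k2 w2 q'.
Proof.
split.
- elim: k1 q w => [|t k1 IH] q w /= h; first by exists q, [::], w; do !split=> //; constructor.
  have [q1 [o [w1 [ho [/IH [q2 [w2 [w3 [-> [h2 h3]]]]] ->]]]]] := runs_cons h.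
  by exists q2, (o ++ w2), w3; rewrite catA; do !split=> //; apply: RunCons h2.
- case=> q1 [w1 [w2 [-> [h1 h2]]]].
  elim: h1 h2 => {q k1 w1 q1} // q t k q1 o w1 q2 ho _ IH h2.
  by rewrite -catA; apply: RunCons ho (IH h2).
Qed.

Variables (G : CFG T1) (q0 : Q) (acc : pred Q).
Local Notation V := (cfg_V G).

(* Nonterminals of the image grammar: the start symbol [None], and triples
   [Some (q, X, q')] generating the outputs of runs from [q] to [q'] on the
   words generated by [X]. *)
Definition image_V : finType := option (Q * V * Q).

Inductive annotated : Q -> seq (V + T1) -> Q -> seq (image_V + T2) -> Prop :=
| AnnNil q : annotated q [::] q [::]
| AnnTerm q t s q1 o q' r : (q1, o) \in tr q t -> annotated q1 s q' r ->
    annotated q (inr t :: s) q' (map inr o ++ r)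
| AnnNonterm q X s q1 q' r : annotated q1 s q' r ->
    annotated q (inl X :: s) q' (inl (Some (q, X, q1)) :: r).

Fixpoint annotations (q : Q) (s : seq (V + T1)) : seq (Q * seq (image_V + T2)) :=
  match s with
  | [::] => [:: (q, [::])]
  | inr t :: s' => flatten [seq [seq (x.1, map inr qo.2 ++ x.2) | x <- annotations qo.1 s']
                           | qo <- tr q t]
  | inl X :: s' => flatten [seq [seq (x.1, inl (Some (q, X, q1)) :: x.2) | x <- annotations q1 s']
                           | q1 <- enum Q]
  end.

Lemma annotationsP q s q' r : annotated q s q' r <-> (q', r) \in annotations q s.
Proof.
split.
- elim=> {q s q' r} [q|q t s q1 o q' r ho _ IH|q X s q1 q' r _ IH] /=.
  + by rewrite inE.
  + by apply/flatten_mapP; exists (q1, o) => //; apply/mapP; exists (q', r).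
  + by apply/flatten_mapP; exists q1; rewrite ?mem_enum //; apply/mapP; exists (q', r).
- elim: s q q' r => [|[X|t] s IH] q q' r /=.
  + by rewrite inE => /eqP [-> ->]; constructor.
  + by case/flatten_mapP=> q1 _ /mapP [[q2 r2] h [-> ->]]; constructor; apply: IH.
  + case/flatten_mapP=> [[q1 o] ho /mapP [[q2 r2] h [-> ->]]].
    by apply: AnnTerm ho (IH _ _ _ h).
Qed.

Definition image_rules : seq (image_V * seq (image_V + T2)) :=
  [seq (None, [:: inl (Some (q0, cfg_start G, q))]) | q <- enum Q & acc q] ++
  flatten [seq flatten [seq [seq (Some (q, p.1, x.1), x.2) | x <- annotations q p.2]
                       | q <- enum Q]
          | p <- cfg_rules G].

Definition image_cfg : CFG T2 :=
  {| cfg_V := image_V; cfg_start := None; cfg_rules := image_rules |}.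

Definition image_sem (Z : image_V) (w : seq T2) : Prop :=
  match Z with
  | None => exists k q, lfp (rules_of G) (cfg_start G) k /\ runs q0 k w q /\ acc q
  | Some (q, X, q') => exists k, lfp (rules_of G) X k /\ runs q k w q'
  end.

Lemma annotated_sound q s q' r w : annotated q s q' r -> yields image_sem r w ->
  exists k, yields (lfp (rules_of G)) s k /\ runs q k w q'.
Proof.
move=> h; elim: h w => {q s q' r} [q|q t s q1 o q' r ho _ IH|q X s q1 q' r _ IH] w.
- by move/yields_nil ->; exists [::]; split; constructor.
- case/yields_cat=> w1 [w2 [-> [/yields_terms -> /IH [k [hk hr]]]]].
  by exists (t :: k); split; [constructor|apply: RunCons ho hr].
- move=> hy; have [u [w' [-> [[k1 [hk1 hr1]] /IH [k2 [hk2 hr2]]]]]] := yields_nonterm hy.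
  exists (k1 ++ k2); split; first by constructor.
  by apply/runs_cat; exists q1, u, w'.
Qed.

Lemma image_sound Z w : lfp (rules_of image_cfg) Z w -> image_sem Z w.
Proof.
move: Z w; apply: lfp_ind => Z rhs w; rewrite /rules_of /= mem_cat => /orP [].
- case/mapP=> q; rewrite mem_filter => /andP [hq _] [-> ->].
  move=> hy; have [u [w' [-> [[k [hk hr]] /yields_nil ->]]]] := yields_nonterm hy.
  by exists k, q; rewrite cats0.
- case/flatten_mapP=> [[X s] hX /flatten_mapP [q _ /mapP [[q' r] /annotationsP hr [-> ->]]]].
  case/(annotated_sound hr) => k [hk hrun]; exists k; split=> //.
  exact: lfp_closed hX hk.
Qed.

Lemma annotated_complete s k :
  yields (fun X k' => forall q w q', runs q k' w q' ->
                        lfp (rules_of image_cfg) (Some (q, X, q')) w) s k ->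
  forall q w q', runs q k w q' ->
    exists r, annotated q s q' r /\ yields (lfp (rules_of image_cfg)) r w.
Proof.
elim=> {s k} [|t s k _ IH|X s k1 k2 hX _ IH] q w q' hr.
- by case/runs_nil: hr => -> ->; exists [::]; split; constructor.
- have [q1 [o [w1 [ho [hr1 ->]]]]] := runs_cons hr.
  have [r [hann hy]] := IH _ _ _ hr1.
  exists (map inr o ++ r); split; first exact: AnnTerm ho hann.
  by apply/yields_cat; exists o, w1; do !split=> //; apply/yields_terms.
- case/runs_cat: hr => q1 [w1 [w2 [-> [h1 h2]]]].
  have [r [hann hy]] := IH _ _ _ h2.
  by exists (inl (Some (q, X, q1)) :: r); split; constructor; auto.
Qed.

Lemma image_complete X k : lfp (rules_of G) X k ->
  forall q w q', runs q k w q' -> lfp (rules_of image_cfg) (Some (q, X, q')) w.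
Proof.
move: X k; apply: lfp_ind => X s k hs hy q w q' hr.
have [r [hann hr']] := annotated_complete hy hr.
apply: lfp_closed hr'; rewrite /rules_of /= mem_cat; apply/orP; right.
apply/flatten_mapP; exists (X, s) => //; apply/flatten_mapP; exists q; first by rewrite mem_enum.
by apply/mapP; exists (q', r) => //; apply/annotationsP.
Qed.
End Transducer.

Lemma cf_transduce (T1 T2 Q : finType) (tr : Q -> T1 -> seq (Q * seq T2))
  (q0 : Q) (acc : pred Q) (L : seq T1 -> Prop) : context_free L ->
  context_free (fun w => exists k q, L k /\ runs tr q0 k w q /\ acc q).
Proof.
case/cf_lfpP=> G h; apply/cf_lfpP; exists (image_cfg tr G q0 acc) => w; split.
- by move/image_sound => /= [k [q [hk hr]]]; exists k, q; rewrite -h.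
- case=> k [q [/h hk [hr ha]]].
  apply: (@lfp_closed _ _ _ _ [:: inl (Some (q0, cfg_start G, q))]).
    rewrite /rules_of /= mem_cat; apply/orP; left.
    by apply/mapP; exists q; rewrite // mem_filter ha mem_enum.
  rewrite -(cats0 w); constructor; last exact: YieldsNil.
  exact: (@image_complete _ _ _ tr G q0 acc _ _ hk _ _ _ hr).
Qed.

Section System.
Variables (T J : finType) (G : J -> CFG (J + T)).

(* Merging a family of grammars [G j], in which the terminal [inl j'] stands
   for the start symbol of [G j'], into a single grammar. *)
Definition system_V : finType := {j : J & cfg_V (G j)}.
Definition tagV j (X : cfg_V (G j)) : system_V := Tagged (fun j => cfg_V (G j)) X.

Definition system_sym j (x : cfg_V (G j) + (J + T)) : system_V + T :=
  match x with
  | inl X => inl (tagV X)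
  | inr (inl j') => inl (tagV (cfg_start (G j')))
  | inr (inr t) => inr t
  end.

Definition system_rules : seq (system_V * seq (system_V + T)) :=
  flatten [seq [seq (tagV p.1, map (@system_sym j) p.2) | p <- cfg_rules (G j)] | j <- enum J].

Definition system_cfg (j0 : J) : CFG T :=
  {| cfg_V := system_V; cfg_start := tagV (cfg_start (G j0)); cfg_rules := system_rules |}.

Variable j0 : J.
Local Notation Sys := (rules_of (system_cfg j0)).

Lemma system_sound (P : J -> seq T -> Prop) :
  (forall j k w, lfp (rules_of (G j)) (cfg_start (G j)) k -> yields P k w -> P j w) ->
  forall Z w, lfp Sys Z w ->
    exists k, lfp (rules_of (G (tag Z))) (tagged Z) k /\ yields P k w.
Proof.
move=> cl; apply: lfp_ind => Z r w /flatten_mapP [j _ /mapP [[X s] hX [-> ->]]] /= hy.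
suff [k [hk hw]] : exists k, yields (lfp (rules_of (G j))) s k /\ yields P k w.
  by exists k; split=> //; apply: lfp_closed hX hk.
elim: s w hy {hX} => [|[X'|[j'|t]] s IH] w /= hy.
- by rewrite (yields_nil hy); exists [::]; split; constructor.
- have [u [w' [-> [[k1 [hk1 hy1]] /IH [k2 [hk2 hy2]]]]]] := yields_nonterm hy.
  by exists (k1 ++ k2); split; [constructor|apply/yields_cat; exists u, w'].
- have [u [w' [-> [[k1 [hk1 hy1]] /IH [k2 [hk2 hy2]]]]]] := yields_nonterm hy.
  by exists (inl j' :: k2); split; constructor=> //; apply: cl hk1 hy1.
- have [w' [-> /IH [k2 [hk2 hy2]]]] := yields_term hy.
  by exists (inr t :: k2); split; constructor.
Qed.

Definition system_lang (j : J) (w : seq T) : Prop := lfp Sys (tagV (cfg_start (G j))) w.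

Lemma system_yields j s k w :
  yields (fun X k => forall w, yields system_lang k w -> lfp Sys (tagV X) w) s k ->
  yields system_lang k w -> yields (lfp Sys) (map (@system_sym j) s) w.
Proof.
move=> hy; elim: hy w => {s k} [|[j'|t] s k _ IH|X s k1 k2 hX _ IH] w /=.
- by move/yields_nil ->; constructor.
- move=> hy; have [u [w' [-> [hu hw']]]] := yields_nonterm hy.
  by constructor=> //; apply: IH.
- by move=> hy; have [w' [-> hw']] := yields_term hy; constructor; apply: IH.
- by case/yields_cat=> w1 [w2 [-> [h1 h2]]]; constructor; [apply: hX|apply: IH].
Qed.

Lemma system_complete j X k : lfp (rules_of (G j)) X k ->
  forall w, yields system_lang k w -> lfp Sys (tagV X) w.
Proof.
move: X k; apply: lfp_ind => X s k hs hy w hw.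
apply: (lfp_closed _ (system_yields hy hw)).
apply/flatten_mapP; exists j; first by rewrite mem_enum.
by apply/mapP; exists (X, s).
Qed.
End System.

Lemma cf_lfp (T J : finType) (K : J -> seq (J + T) -> Prop) :
  (forall j, context_free (K j)) -> forall j, context_free (lfp K j).
Proof.
move=> hK j0.
have hG j : {G : CFG (J + T) | forall s, lfp (rules_of G) (cfg_start G) s <-> K j s}.
  by apply: constructive_indefinite_description; apply/cf_lfpP.
pose G j := proj1_sig (hG j).
have GK j s : lfp (rules_of (G j)) (cfg_start (G j)) s <-> K j s := proj2_sig (hG j) s.
apply/cf_lfpP; exists (system_cfg G j0) => w; split.
- have cl j k u : lfp (rules_of (G j)) (cfg_start (G j)) k -> yields (lfp K) k u -> lfp K j u.
    by move/GK; apply: lfp_closed.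
  by case/(system_sound cl) => k [/cl]; apply.
- move: j0 w; apply: lfp_ind => j k w /GK hk hw.
  exact: system_complete hk _ hw.
Qed.

Section Deterministic.
Variables (T1 T2 Q : finType) (next : Q -> T1 -> Q) (out : Q -> T1 -> seq T2).

Definition det_tr (q : Q) (t : T1) : seq (Q * seq T2) := [:: (next q t, out q t)].

Fixpoint det_output (q : Q) (k : seq T1) : seq T2 :=
  if k is t :: k' then out q t ++ det_output (next q t) k' else [::].

Lemma runs_det q k w q' :
  runs det_tr q k w q' <-> w = det_output q k /\ q' = foldl next q k.
Proof.
elim: k q w q' => [|t k IH] q w q' /=.
  by split=> [/runs_nil [-> ->]|[-> ->]]; last exact: RunNil.
split=> [/runs_cons [q1 [o [w1 [ho [/IH [-> ->] ->]]]]]|[-> ->]].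
  by move: ho; rewrite inE => /eqP [-> ->].
by apply: (RunCons (q1 := next q t)); [rewrite inE|apply/IH; split].
Qed.

Lemma cf_det_transduce (q0 : Q) (acc : pred Q) (L : seq T1 -> Prop) :
  context_free L ->
  context_free (fun w => exists k, L k /\ acc (foldl next q0 k) /\ w = det_output q0 k).
Proof.
move/(cf_transduce det_tr q0 acc); apply: cf_ext => w; split.
  by case=> k [q [hk [/runs_det [-> ->] ha]]]; exists k.
by case=> k [hk [ha ->]]; exists k, (foldl next q0 k); do !split=> //; apply/runs_det.
Qed.
End Deterministic.

Lemma cf_hom (T1 T2 : finType) (f : T1 -> seq T2) (L : seq T1 -> Prop) :
  context_free L -> context_free (fun w => exists k, L k /\ w = flatten (map f k)).
Proof.
have out_hom k : det_output (fun _ _ => tt) (fun _ => f) tt k = flatten (map f k).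
  by elim: k => //= t k ->.
move/(cf_det_transduce (fun _ _ => tt) (fun _ => f) tt predT); apply: cf_ext => w.
by split=> [[k [hk [_ ->]]]|[k [hk ->]]]; exists k; rewrite out_hom.
Qed.

Lemma cf_map (T1 T2 : finType) (f : T1 -> T2) (L : seq T1 -> Prop) :
  context_free L -> context_free (fun w => exists k, L k /\ w = map f k).
Proof.
move/(cf_hom (fun t => [:: f t])); apply: cf_ext => w.
by split=> [[k [hk ->]]|[k [hk ->]]]; exists k; rewrite flatten_map1.
Qed.

Section Phase.
Variables (X Y : finType) (pf pg : pred X) (f g : X -> seq Y) (c : seq Y).

(* A two-phase homomorphism on words over [option X] with a single marker
   [None]: letters [pf] are mapped by [f] before the marker, the marker by
   [c] and letters [pg] by [g] after it; all other words are rejected.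
   State [Some false] is before the marker, [Some true] after, [None] dead. *)
Definition phase_next (q : option bool) (x : option X) : option bool :=
  match q, x with
  | Some false, Some a => if pf a then Some false else None
  | Some false, None => Some true
  | Some true, Some a => if pg a then Some true else None
  | _, _ => None
  end.

Definition phase_out (q : option bool) (x : option X) : seq Y :=
  match q, x with
  | Some false, Some a => f a
  | Some false, None => c
  | Some true, Some a => g a
  | _, _ => [::]
  end.

Lemma phase_dead k : foldl phase_next None k = None.
Proof. by elim: k. Qed.

Lemma phase_after k : foldl phase_next (Some true) k = Some true <->
  exists v, all pg v /\ k = map Some v.
Proof.
elim: k => [|[a|] k IH] /=; first by split=> // _; exists [::].
- case ha: (pg a); last first.
    by rewrite phase_dead; split=> // [[[|b v] [//= /andP [hb _] [eba _]]]]; rewrite -eba ha in hb.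
  rewrite IH; split=> [[v [hv ->]]|[[|b v] [//= /andP [_ hv] [_ ->]]]]; last by exists v.
  by exists (a :: v); rewrite /= ha hv.
- by rewrite phase_dead; split=> // [[[|b v] [_ //]]].
Qed.

Lemma phase_before k : foldl phase_next (Some false) k = Some true <->
  exists u v, [/\ all pf u, all pg v & k = map Some u ++ None :: map Some v].
Proof.
elim: k => [|[a|] k IH] /=; first by split=> // [[[|? ?] [? [? ? //]]]].
- case ha: (pf a); last first.
    rewrite phase_dead; split=> // [[[|b u] [v [//= /andP [hb _] _ [eba _]]]]].
    by rewrite -eba ha in hb.
  rewrite IH; split=> [[u [v [hu hv ->]]]|[[|b u] [v [//= /andP [_ hu] hv [_ ->]]]]].
    by exists (a :: u), v; rewrite /= ha hu.
  by exists u, v.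
- rewrite phase_after; split=> [[v [hv ->]]|[[|b u] [v [_ hv //= [->]]]]].
    by exists [::], v.
  by exists v.
Qed.

Lemma phase_output u v : all pf u -> all pg v ->
  det_output phase_next phase_out (Some false) (map Some u ++ None :: map Some v) =
  flatten (map f u) ++ c ++ flatten (map g v).
Proof.
move=> + hv; elim: u => [_|a u IH /= /andP [-> /IH ->]] /=; last by rewrite catA.
congr (_ ++ _); elim: v hv => //= b v IH /andP [hb /IH <-].
by rewrite hb.
Qed.

Lemma cf_phase_hom (L : seq (option X) -> Prop) : context_free L ->
  context_free (fun w => exists u v, [/\ all pf u, all pg v,
    L (map Some u ++ None :: map Some v) & w = flatten (map f u) ++ c ++ flatten (map g v)]).
Proof.
move/(cf_det_transduce phase_next phase_out (Some false) (pred1 (Some true))).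
apply: cf_ext => w; split.
- case=> k [hk [/eqP /phase_before [u [v [hu hv ek]]] ->]]; subst k.
  by exists u, v; split=> //; apply: phase_output.
- case=> u [v [hu hv hL ->]]; exists (map Some u ++ None :: map Some v).
  split=> //; split; last by rewrite phase_output.
  by apply/eqP/phase_before; exists u, v.
Qed.
End Phase.

Section InverseHom.
Variables (X Y : finType) (h : X -> seq Y).
Hypothesis h_nonerasing : forall x, h x != [::].

(* The transducer reading a word of [Y] and guessing its factorisation into
   images [h x]: state [None] is between two factors; state [Some (x, j)]
   means that the first [j] letters of [h x] have been read. *)
Definition ih_state : finType := option (X * 'I_(\max_(x : X) size (h x)).+1).

Definition pending (q : ih_state) : seq Y := if q is Some (x, j) then drop j (h x) else [::].

Definition ih_at (x : X) (j : nat) : ih_state :=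
  if j < size (h x) then Some (x, inord j) else None.

Definition ih_tr (q : ih_state) (y : Y) : seq (ih_state * seq X) :=
  match q with
  | None => [seq (ih_at x 1, [:: x]) | x <- enum X & ohead (h x) == Some y]
  | Some (x, j) =>
      if drop j (h x) is y' :: _ then if y' == y then [:: (ih_at x j.+1, [::])] else [::]
      else [::]
  end.

Definition ih_valid (q : ih_state) : bool := (q == None) || (pending q != [::]).

Lemma ih_inordK x j : j < size (h x) -> @inord (\max_(x : X) size (h x)) j = j :> nat.
Proof.
move=> hj; rewrite inordK // ltnS.
by apply: leq_trans (ltnW hj) (@leq_bigmax X (fun x => size (h x)) x).
Qed.

Lemma pending_at x j : pending (ih_at x j) = drop j (h x).
Proof.
rewrite /ih_at; case: (ltnP j (size (h x))) => hj /=; first by rewrite (ih_inordK hj).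
by rewrite drop_oversize.
Qed.

Lemma ih_valid_at x j : ih_valid (ih_at x j).
Proof.
rewrite /ih_valid /ih_at; case: (ltnP j (size (h x))) => //= hj.
by rewrite (ih_inordK hj) -size_eq0 size_drop -lt0n subn_gt0.
Qed.
Lemma runs_ih q ys xs : ih_valid q ->
  runs ih_tr q ys xs None <-> ys = pending q ++ flatten (map h xs).
Proof.
elim: ys q xs => [|y ys IH] q xs hq.
  split=> [/runs_nil [-> <-] //|/esym/nilP].
  rewrite cat_nilp => /andP [/nilP hp]; move: hq; rewrite /ih_valid hp orbF => /eqP ->.
  case: xs => [_|x xs]; first exact: RunNil.
  by rewrite /= cat_nilp /nilp size_eq0 (negbTE (h_nonerasing x)).
split=> [/runs_cons [q1 [o [w1 [ho [hr ->]]]]]|].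
- case: q hq ho => [[x j]|] /= hq.
    case E: (drop j (h x)) hq => [|y' t] //= _.
    case: (eqVneq y' y) => [<-|//]; rewrite inE => /eqP [eq1 eo].
    subst q1 o; move/IH: hr; rewrite ih_valid_at pending_at => /(_ isT) ->.
    by rewrite -add1n -drop_drop E drop1.
  case/mapP=> x; rewrite mem_filter => /andP [hx _] [eq1 eo]; subst q1 o.
  move/IH: hr; rewrite ih_valid_at pending_at => /(_ isT) ->.
  by rewrite /=; case: (h x) hx => [|y2 t] //= /eqP [->]; rewrite drop0.
- case: q hq => [[x j]|] /= hq.
    move: hq; rewrite /ih_valid /=.
    case E: (drop j (h x)) => [|y' t] //= _ [ey eys]; subst y'.
    apply: (RunCons (q1 := ih_at x j.+1) (o := [::])); first by rewrite /= E eqxx inE.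
    by apply/IH; rewrite ?ih_valid_at // pending_at -add1n -drop_drop E drop1.
  case: xs => [|x xs] //=; case E: (h x) (h_nonerasing x) => [|y' t] //= _ [ey eys].
  subst y'; apply: (RunCons (q1 := ih_at x 1) (o := [:: x])).
    by apply/mapP; exists x; rewrite // mem_filter E eqxx mem_enum.
  by apply/IH; rewrite ?ih_valid_at // pending_at E drop1.
Qed.
End InverseHom.
Arguments ih_tr {X Y} h q y.

Lemma cf_inverse_hom (X Y : finType) (h : X -> seq Y) (L : seq Y -> Prop) :
  (forall x, h x != [::]) -> context_free L ->
  context_free (fun xs => L (flatten (map h xs))).
Proof.
move=> hne /(cf_transduce (ih_tr h) None (pred1 None)); apply: cf_ext => xs; split.
  by case=> ys [q [hL [hr /eqP eq]]]; subst q; move/runs_ih: hr => /(_ hne isT) /= <-.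
by move=> hL; exists (flatten (map h xs)), None; do !split=> //; apply/runs_ih.
Qed.

Lemma cf_or (T : finType) (L1 L2 : seq T -> Prop) :
  context_free L1 -> context_free L2 -> context_free (fun w => L1 w \/ L2 w).
Proof.
move=> h1 h2.
pose K (j : option bool) : seq (option bool + T) -> Prop :=
  if j is Some b then fun s => exists x, (if b then L2 else L1) x /\ s = map inr x
  else fun s => s \in [:: [:: inl (Some false)]; [:: inl (Some true)]].
have hK j : context_free (K j).
  by case: j => [[]|]; [apply: cf_map|apply: cf_map|apply: cf_finite].
have KL b w : lfp K (Some b) w <-> (if b then L2 else L1) w by apply: lfp_terminal.
apply: cf_ext (cf_lfp hK None) => w; rewrite lfp_unfold; split.
- case=> s [+ hy]; rewrite /K !inE => /orP [] /eqP es; subst s;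
    have [u [w' [-> [/KL hu /yields_nil ->]]]] := yields_nonterm hy; rewrite cats0; by [left|right].
- case=> hw; [exists [:: inl (Some false)]|exists [:: inl (Some true)]];
    rewrite /K !inE eqxx ?orbT; split=> //; rewrite -[w]cats0; do !constructor; exact/KL.
Qed.

Section Patterns.
Variables (J : Type) (T X Z : eqType) (f : X -> T) (P : J -> seq T -> Prop) (j : J).
Variables (Q : Z -> Prop) (e : Z -> seq T).
Hypothesis hP : forall t, P j t <-> exists z, Q z /\ t = e z.

Definition lpat (xs : seq X) : seq (J + T) := flatten [seq [:: inr (f x); inl j] | x <- xs].
Definition rpat (xs : seq X) : seq (J + T) := flatten [seq [:: inl j; inr (f x)] | x <- xs].

Lemma yields_lpat xs rest w : yields P (lpat xs ++ rest) w <->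
  exists ps : seq (X * Z), [/\ map fst ps = xs, forall p, p \in ps -> Q p.2 &
    exists2 w', w = flatten [seq f p.1 :: e p.2 | p <- ps] ++ w' & yields P rest w'].
Proof.
elim: xs w => [|x xs IH] w /=.
  split=> [hw|[ps [eps _ [w' -> hw']]]]; first by exists [::]; split=> //; exists w.
  by case: ps eps.
split.
- move=> hy; have [w1 [-> hy1]] := yields_term hy.
  have [t [w2 [-> [/hP [z [hz ->]] /IH [ps [eps hps [w' -> hw']]]]]]] := yields_nonterm hy1.
  exists ((x, z) :: ps); split; first by rewrite /= eps.
    by move=> p; rewrite in_cons => /orP [/eqP -> //|]; apply: hps.
  by exists w'; rewrite //= catA.
- case=> [[|[x' z] ps] [//= [-> eps] hps [w' -> hw']]].
  rewrite /= -catA; constructor; constructor.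
    by apply/hP; exists z; split=> //; apply: (hps (_, z)); apply: mem_head.
  apply/IH; exists ps; split=> // [p hp|]; last by exists w'.
  by apply: hps; rewrite inE hp orbT.
Qed.

Lemma yields_rpat xs w : yields P (rpat xs) w <->
  exists ps : seq (X * Z), [/\ map fst ps = xs, forall p, p \in ps -> Q p.2 &
    w = flatten [seq e p.2 ++ [:: f p.1] | p <- ps]].
Proof.
elim: xs w => [|x xs IH] w /=.
  split=> [/yields_nil ->|[ps [eps _ ->]]]; first by exists [::].
  by case: ps eps => // _; apply: YieldsNil.
split.
- move=> hy; have [t [w1 [-> [/hP [z [hz ->]] hy1]]]] := yields_nonterm hy.
  have [w2 [-> /IH [ps [eps hps ->]]]] := yields_term hy1.
  exists ((x, z) :: ps); split; first by rewrite /= eps.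
    by move=> p; rewrite in_cons => /orP [/eqP -> //|]; apply: hps.
  by rewrite /= -catA.
- case=> [[|[x' z] ps] [//= [-> eps] hps ->]].
  rewrite -catA; constructor.
    by apply/hP; exists z; split=> //; apply: (hps (_, z)); apply: mem_head.
  constructor; apply/IH; exists ps; split=> // p hp.
  by apply: hps; rewrite inE hp orbT.
Qed.
End Patterns.

Lemma lpat_map (J : Type) (T X Y : eqType) (f : Y -> T) (h : X -> Y) (j : J) xs :
  lpat f j (map h xs) = lpat (fun x => f (h x)) j xs.
Proof. by rewrite /lpat -map_comp. Qed.

Lemma rpat_map (J : Type) (T X Y : eqType) (f : Y -> T) (h : X -> Y) (j : J) xs :
  rpat f j (map h xs) = rpat (fun x => f (h x)) j xs.
Proof. by rewrite /rpat -map_comp. Qed.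

Lemma meval_cat (M : monoidT) (A : Type) (g : A -> M) u v :
  meval g (u ++ v) = mop (meval g u) (meval g v).
Proof. by elim: u => [|a u IH] /=; rewrite ?munitl // IH massoc. Qed.

Lemma meval_map (M : monoidT) (A B : Type) (g : B -> M) (f : A -> B) u :
  meval g (map f u) = meval (fun a => g (f a)) u.
Proof. by elim: u => [|a u IH] //=; rewrite IH. Qed.

Lemma hom_meval (M N : monoidT) (f : M -> N) (A : Type) (g : A -> M) u :
  is_hom f -> f (meval g u) = meval (fun a => f (g a)) u.
Proof. by case=> f1 fM; elim: u => [|a u IH] //=; rewrite fM IH. Qed.

Lemma hom_id (Q : monoidT) : is_hom (fun x : Q => x).
Proof. by []. Qed.

Lemma hom_trivial (Q R : monoidT) : is_hom (fun _ : Q => munit R).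
Proof. by split=> // x y; rewrite munitl. Qed.

Definition isone (M : monoidT) (x : M) : bool :=
  if excluded_middle_informative (x = munit M) then true else false.

Lemma isoneP (M : monoidT) (x : M) : reflect (x = munit M) (isone x).
Proof. by rewrite /isone; case: excluded_middle_informative => h; constructor. Qed.

Lemma isone_unit (M : monoidT) : isone (munit M).
Proof. exact/isoneP. Qed.

Lemma sig_eq (T : Type) (P : T -> Prop) (x y : {t | P t}) :
  proj1_sig x = proj1_sig y -> x = y.
Proof. by case: x y => x px [y py] /= exy; subst y; rewrite (proof_irrelevance _ px py). Qed.

Section Submonoid.
Variables (P : monoidT) (S : P -> Prop).
Hypotheses (S1 : S (munit P)) (SM : forall x y, S x -> S y -> S (mop x y)).

Definition sub_op (x y : {p | S p}) : {p | S p} :=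
  exist _ (mop (proj1_sig x) (proj1_sig y)) (SM (proj2_sig x) (proj2_sig y)).

Definition submonoid : monoidT.
Proof.
refine {| mcar := {p | S p}; mop := sub_op; munit := exist _ (munit P) S1 |}.
- by move=> x y z; apply: sig_eq; apply: massoc.
- by move=> x; apply: sig_eq; apply: munitl.
- by move=> x; apply: sig_eq; apply: munitr.
Defined.
End Submonoid.

Section FreeProduct.
Variables (M N P : monoidT) (iM : M -> P) (iN : N -> P).
Hypothesis fpP : is_free_product iM iN.

Lemma free_product_sym : is_free_product iN iM.
Proof.
case: fpP => hM [hN U]; split=> //; split=> // Q f g hf hg.
have [[h [hh [e1 e2]]] uniq] := U Q g f hg hf; split; first by exists h.
by move=> h1 h2 hh1 hh2 ? ? ? ?; apply: uniq.
Qed.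

Lemma free_product_retraction : exists r : P -> M,
  [/\ is_hom r, forall m, r (iM m) = m & forall n, r (iN n) = munit M].
Proof.
case: fpP => _ [_ U].
by have [[r [hr [e1 e2]]] _] := U M _ _ (hom_id M) (hom_trivial N M); exists r.
Qed.

Lemma free_product_ind (S : P -> Prop) :
  S (munit P) -> (forall x y, S x -> S y -> S (mop x y)) ->
  (forall m, S (iM m)) -> (forall n, S (iN n)) -> forall p, S p.
Proof.
move=> S1 SM SiM SiN; case: fpP => hM [hN U].
pose f (m : M) : submonoid S1 SM := exist _ (iM m) (SiM m).
pose g (n : N) : submonoid S1 SM := exist _ (iN n) (SiN n).
have hf : is_hom f by case: hM => h1 h2; split=> [|x y]; apply: sig_eq; rewrite /= ?h1 ?h2.
have hg : is_hom g by case: hN => h1 h2; split=> [|x y]; apply: sig_eq; rewrite /= ?h1 ?h2.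
have [[h [[h1 h2] [e1 e2]]] _] := U _ f g hf hg.
have [_ uniq] := U P iM iN hM hN.
have hv : is_hom (fun p => proj1_sig (h p)) by split=> [|x y]; rewrite ?h1 ?h2.
move=> p; rewrite -(uniq _ _ hv (hom_id P) _ _ (fun _ => erefl) (fun _ => erefl) p).
- exact: proj2_sig.
- by move=> x; rewrite e1.
- by move=> y; rewrite e2.
Qed.
End FreeProduct.

Section NormalForm.
Variables (M N : monoidT).

Definition unit_syl (x : M + N) : bool :=
  match x with inl m => isone m | inr n => isone n end.

Definition syl_mul (x y : M + N) : option (M + N) :=
  match x, y with
  | inl m, inl m' => Some (inl (mop m m'))
  | inr n, inr n' => Some (inr (mop n n'))
  | _, _ => None
  end.

Fixpoint reduced (r : seq (M + N)) : Prop :=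
  if r is x :: r' then
    [/\ ~~ unit_syl x, (if r' is y :: _ then syl_mul x y = None else True) & reduced r']
  else True.

Definition push (x : M + N) (r : seq (M + N)) : seq (M + N) :=
  if unit_syl x then r else x :: r.

Definition act (x : M + N) (r : seq (M + N)) : seq (M + N) :=
  if r is y :: r' then if syl_mul x y is Some z then push z r' else push x r
  else push x r.

Lemma act_reduced x r : reduced r -> reduced (act x r).
Proof.
rewrite /act /push; case: r => [|y r] /=; first by case: ifP => //= /negbT.
move=> [hy hyr hr].
case: x y hy hyr => [m|n] [m1|n1] /= hy hyr; case: ifP => //= /negbT hu;
  by split=> //; case: r hyr {hr} => [|[?|?] ?].
Qed.

Lemma act_unit x r : unit_syl x -> reduced r -> act x r = r.
Proof.
rewrite /act /push => hx; case: r => [|y r] /=; first by rewrite hx.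
case=> hy _ _; case: x y hx hy => [m|n] [m1|n1] /= hx hy; rewrite ?hx //.
  by move/isoneP: hx => ->; rewrite munitl (negbTE hy).
by move/isoneP: hx => ->; rewrite munitl (negbTE hy).
Qed.

Lemma act_merge x x' xx r : syl_mul x x' = Some xx -> reduced r ->
  act xx r = act x (act x' r).
Proof.
case: x x' => [m|n] [m'|n'] //= [<-] {xx}; case: r => [|[m1|n1] r] /=.
all: rewrite /push /=.
- by case: (isoneP m') => [->|_] _; rewrite /act /push /= ?munitr ?isone_unit.
- case=> _ hr1 _; rewrite -massoc; case: (isoneP (mop m' m1)) => [->|_]; last by [].
  by rewrite munitr; case: r hr1 => [|[m2|n2] r].
- by case: (isoneP m') => [->|_] _; rewrite /act /push /= ?munitr ?isone_unit.
- by case: (isoneP n') => [->|_] _; rewrite /act /push /= ?munitr ?isone_unit.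
- by case: (isoneP n') => [->|_] _; rewrite /act /push /= ?munitr ?isone_unit.
- case=> _ hr1 _; rewrite -massoc; case: (isoneP (mop n' n1)) => [->|_]; last by [].
  by rewrite munitr; case: r hr1 => [|[m2|n2] r].
Qed.
(* [M * N] acts on its normal forms: the monoid of maps on normal forms,
   with the homomorphisms from each factor given by [act]. *)
Definition nf_type := {r : seq (M + N) | reduced r}.

Definition nf_maps : monoidT.
Proof. by refine {| mcar := nf_type -> nf_type; mop := fun f g r => f (g r); munit := id |}. Defined.

Definition act_map (x : M + N) : nf_maps :=
  fun r => exist _ (act x (proj1_sig r)) (act_reduced x (proj2_sig r)).

Lemma act_map_hom (F : monoidT) (emb : F -> M + N) :
  unit_syl (emb (munit F)) -> (forall a b, syl_mul (emb a) (emb b) = Some (emb (mop a b))) ->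
  is_hom (fun a => act_map (emb a)).
Proof.
move=> e1 eM; split=> [|a b]; apply: functional_extensionality => r; apply: sig_eq => /=.
  exact: act_unit (proj2_sig r).
exact: act_merge (eM a b) (proj2_sig r).
Qed.
End NormalForm.

Section WordProblem.
Variables (M N P : monoidT) (iM : M -> P) (iN : N -> P).
Hypothesis fpP : is_free_product iM iN.
Variables (A B : finType) (gA : A -> M) (gB : B -> N).
Local Notation C := (A + B)%type.

Definition gP (c : C) : P := match c with inl a => iM (gA a) | inr b => iN (gB b) end.
Definition letter (c : C) : M + N := match c with inl a => inl (gA a) | inr b => inr (gB b) end.

Definition nf (w : seq C) : seq (M + N) := foldr (fun c => act (letter c)) [::] w.

(* Equal elements have equal normal forms: by the universal property, the
   action of words on normal forms only depends on their value. *)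
Lemma nf_meval u v : meval gP u = meval gP v -> nf u = nf v.
Proof.
case: fpP => hM [hN U].
have [[h [[h1 h2] [e1 e2]]] _] := U _ _ _
  (@act_map_hom M N M inl (isone_unit M) (fun a b => erefl))
  (@act_map_hom M N N inr (isone_unit N) (fun a b => erefl)).
have hw w r : proj1_sig (h (meval gP w) r) = foldr (fun c => act (letter c)) (proj1_sig r) w.
  elim: w r => [|[a|b] w IH] r /=; rewrite ?h1 // h2 /= -IH.
    by rewrite e1.
  by rewrite e2.
by move=> euv; rewrite /nf -(hw u (exist _ [::] I)) -(hw v (exist _ [::] I)) euv.
Qed.
Definition syllable (cs : seq C) (x : M + N) : Prop :=
  (exists al, cs = map inl al /\ x = inl (meval gA al)) \/
  (exists bl, cs = map inr bl /\ x = inr (meval gB bl)).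

Definition syl_val (x : M + N) : P := match x with inl m => iM m | inr n => iN n end.

Definition blocks (ps : seq (C * seq C)) : seq C := flatten [seq p.1 :: p.2 | p <- ps].

Inductive triv_word : seq C -> Prop :=
| TrivNil : triv_word [::]
| TrivCat x y : triv_word x -> triv_word y -> triv_word (x ++ y)
| TrivBlock ps x : (forall p, p \in ps -> triv_word p.2) ->
    syllable (map fst ps) x -> unit_syl x -> triv_word (blocks ps).

Inductive matched : seq (option C) -> Prop :=
| MatchHash : matched [:: None]
| MatchPad x y s : triv_word x -> triv_word y -> matched s ->
    matched (map Some x ++ s ++ rev (map Some y))
| MatchBlock ps qs x s : (forall p, p \in ps -> triv_word p.2) ->
    (forall p, p \in qs -> triv_word p.2) ->
    syllable (map fst ps) x -> syllable (map fst qs) x -> matched s ->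
    matched (map Some (blocks ps) ++ s ++ rev (map Some (blocks qs))).

Lemma syllable_meval cs x : syllable cs x -> meval gP cs = syl_val x.
Proof.
case: fpP => hM [hN _].
by case=> [[al [-> ->]]|[bl [-> ->]]]; rewrite meval_map /= hom_meval.
Qed.

Lemma unit_syl_val x : unit_syl x -> syl_val x = munit P.
Proof.
case: fpP => [[hM1 _] [[hN1 _] _]].
by case: x => [m|n] /= /isoneP ->.
Qed.

Lemma blocks_meval ps : (forall p, p \in ps -> meval gP p.2 = munit P) ->
  meval gP (blocks ps) = meval gP (map fst ps).
Proof.
elim: ps => [|p ps IH] //= hps.
rewrite /= meval_cat (hps p (mem_head _ _)) munitl -IH // => q hq.
by apply: hps; rewrite inE hq orbT.
Qed.

Lemma triv_word_meval w : triv_word w -> meval gP w = munit P.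
Proof.
elim=> [|x y _ IHx _ IHy|ps x _ IH hx hu] //; first by rewrite meval_cat IHx IHy munitl.
by rewrite blocks_meval // (syllable_meval hx) unit_syl_val.
Qed.

Lemma wp_cat (x y u v : seq C) :
  map Some x ++ (map Some u ++ None :: rev (map Some v)) ++ rev (map Some y) =
  map Some (x ++ u) ++ None :: rev (map Some (y ++ v)).
Proof. by rewrite !map_cat rev_cat -!catA. Qed.

Lemma matched_sound s : matched s -> word_problem gP s.
Proof.
elim=> [|x y s0 hx hy _ [u [v [-> euv]]]|ps qs x s0 hps hqs hpx hqx _ [u [v [-> euv]]]].
- by exists [::], [::].
- exists (x ++ u), (y ++ v); rewrite wp_cat; split=> //.
  by rewrite !meval_cat (triv_word_meval hx) (triv_word_meval hy) euv.
- exists (blocks ps ++ u), (blocks qs ++ v); rewrite wp_cat; split=> //.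
  have hb rs : (forall p, p \in rs -> triv_word p.2) -> forall p, p \in rs -> meval gP p.2 = munit P.
    by move=> hrs p /hrs /triv_word_meval.
  by rewrite !meval_cat !blocks_meval ?(syllable_meval hpx) ?(syllable_meval hqx) ?euv //; apply: hb.
Qed.
Inductive decomp : seq C -> seq (M + N) -> Prop :=
| DecNil z : triv_word z -> decomp z [::]
| DecSyl z ps w r x : triv_word z -> (forall p, p \in ps -> triv_word p.2) ->
    syllable (map fst ps) x -> decomp w r -> decomp (z ++ blocks ps ++ w) (x :: r).

Lemma decomp_triv z w r : triv_word z -> decomp w r -> decomp (z ++ w) r.
Proof.
move=> hz [z' hz'|z' ps w' r' x hz' hps hx hw]; first by apply: DecNil; apply: TrivCat.
by rewrite catA; apply: DecSyl hps hx hw; apply: TrivCat.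
Qed.

Lemma syllable_letter c : syllable [:: c] (letter c).
Proof. by case: c => [a|b]; [left; exists [:: a]|right; exists [:: b]]; rewrite /= munitr. Qed.

Lemma syllable_merge c cs y z : syllable cs y -> syl_mul (letter c) y = Some z ->
  syllable (c :: cs) z.
Proof.
by case: c => [a|b] [[al [-> ->]]|[bl [-> ->]]] //= [<-]; [left; exists (a :: al)|right; exists (b :: bl)].
Qed.

Lemma triv_letter c : unit_syl (letter c) -> triv_word [:: c].
Proof.
move=> hu; have := @TrivBlock [:: (c, [::])] _ _ (syllable_letter c) hu.
by apply=> p; rewrite inE => /eqP ->; apply: TrivNil.
Qed.

Lemma decomp_cons c w r : decomp w r -> decomp (c :: w) (act (letter c) r).
Proof.
have one_block z : (forall p, p \in [:: (c, z)] -> triv_word p.2) <-> triv_word z.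
  by split=> [/(_ (c, z) (mem_head _ _))|hz p]; rewrite // inE => /eqP ->.
case=> [z hz|z ps w' r' y hz hps hy hw] /=; rewrite /push.
  case: ifP => hu; first by rewrite -cat1s; apply/DecNil/TrivCat=> //; apply: triv_letter.
  have := DecSyl TrivNil ((one_block z).2 hz) (syllable_letter c) (DecNil TrivNil).
  by rewrite /blocks /= !cats0.
have hcps : forall p, p \in (c, z) :: ps -> triv_word p.2.
  by move=> p; rewrite inE => /orP [/eqP -> //|/hps].
case E: (syl_mul (letter c) y) => [yy|]; case: ifP => hu.
- have := decomp_triv (TrivBlock hcps (syllable_merge hy E) hu) hw.
  by rewrite /blocks /= -!catA.
- by have := DecSyl TrivNil hcps (syllable_merge hy E) hw; rewrite /blocks /= -!catA.
- by rewrite -cat1s; apply: decomp_triv (triv_letter hu) (DecSyl hz hps hy hw).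
- have := DecSyl TrivNil ((one_block _).2 TrivNil) (syllable_letter c) (DecSyl hz hps hy hw).
  by rewrite /blocks /=.
Qed.

Lemma decomp_nf w : decomp w (nf w).
Proof. by elim: w => [|c w IH] /=; [apply/DecNil/TrivNil|apply: decomp_cons]. Qed.

Lemma decomp_matched u v r : decomp u r -> decomp v r ->
  matched (map Some u ++ None :: rev (map Some v)).
Proof.
move=> hu; elim: hu v => [z hz|z ps w r' x hz hps hx _ IH] v hv.
  by inversion hv as [z' hz'|]; subst; apply: (MatchPad hz hz' MatchHash).
inversion hv as [|z' qs w' r'' x' hz' hqs hqx hw']; subst.
have := MatchBlock hps hqs hx hqx (IH _ hw').
by rewrite wp_cat => /(MatchPad hz hz'); rewrite wp_cat.
Qed.

Lemma wp_matched s : word_problem gP s <-> matched s.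
Proof.
split; last exact: matched_sound.
case=> u [v [-> /nf_meval euv]].
by apply: (decomp_matched (decomp_nf u)); rewrite euv; apply: decomp_nf.
Qed.
End WordProblem.

Lemma split_marker (X : Type) (a c : seq X) b d :
  map Some a ++ None :: b = map Some c ++ None :: d -> a = c /\ b = d.
Proof. by elim: a c => [|x a IH] [|y c] //= [[]]; [case|move=> -> /IH [-> ->]]. Qed.

Section FactorLanguages.
Variables (F : monoidT) (X : finType) (g : X -> F).
Hypothesis cfF : context_free (word_problem g).
Variables (Y J : finType) (f : X -> Y).

Lemma cf_unit_words (j : J) : context_free (fun s =>
  exists al, meval g al = munit F /\ s = lpat f j al).
Proof.
apply: cf_ext (cf_phase_hom predT pred0 (fun a => [:: inr (f a); inl j]) (fun _ => [::]) [::] cfF).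
move=> s; split.
- case=> u [v [_ hv [u0 [v0 [/split_marker [<- e0] euv]]] ->]].
  have ev : v = [::] by case: v hv {e0}.
  move: e0; rewrite ev => /(f_equal size); rewrite size_rev size_map.
  by case: v0 euv => // euv _; rewrite cats0; exists u.
- case=> al [e1 ->]; exists al, [::]; split=> //; first exact/allP.
    by exists al, [::].
  by rewrite cats0.
Qed.

Lemma cf_equal_words (jl jm jr : J) : context_free (fun s =>
  exists al bl, meval g al = meval g bl /\ s = lpat f jl al ++ inl jm :: rpat f jr (rev bl)).
Proof.
apply: cf_ext (cf_phase_hom predT predT (fun a => [:: inr (f a); inl jl])
                 (fun a => [:: inl jr; inr (f a)]) [:: inl jm] cfF) => s; split.
- case=> u [v [_ _ [u0 [v0 [/split_marker [<- ev] euv]]] ->]].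
  by exists u, v0; rewrite -map_rev in ev; rewrite (inj_map (@Some_inj _) ev).
- case=> al [bl [euv ->]]; exists al, (rev bl); split=> //; try exact/allP.
  by exists al, bl; rewrite map_rev.
Qed.
End FactorLanguages.

Section CertifiedLanguages.
Variables (M N : monoidT) (A B : finType) (gA : A -> M) (gB : B -> N).
Hypotheses (cfA : context_free (word_problem gA)) (cfB : context_free (word_problem gB)).
Local Notation C := (A + B)%type.
Local Notation triv_word := (triv_word gA gB).
Local Notation matched := (matched gA gB).
Local Notation syllable := (syllable gA gB).

Definition triv_rules (j : unit) (s : seq (unit + C)) : Prop :=
  s \in [:: [::]; [:: inl tt; inl tt]] \/
  exists cs x, [/\ syllable cs x, unit_syl x & s = lpat id tt cs].

(* Each production set of the system is context-free; here the syllables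
   equal to 1 come from [WP(M)] and [WP(N)]. *)
Lemma cf_triv_rules : context_free (triv_rules tt).
Proof.
apply: cf_or; first exact: cf_finite.
apply: cf_ext (cf_or (cf_unit_words cfA inl tt) (cf_unit_words cfB inr tt)) => s; split.
- case=> [[al [e ->]]|[bl [e ->]]].
    exists (map inl al), (inl (meval gA al)).
    by split; [left; exists al|apply/isoneP|rewrite lpat_map].
  exists (map inr bl), (inr (meval gB bl)).
  by split; [right; exists bl|apply/isoneP|rewrite lpat_map].
- case=> cs [x [[[al [-> ->]]|[bl [-> ->]]] /isoneP e ->]];
    [left; exists al|right; exists bl]; by rewrite lpat_map.
Qed.

Lemma triv_word_lfp w : triv_word w <-> lfp triv_rules tt w.
Proof.
have id_lang (Q : seq C -> Prop) t : Q t <-> exists z, Q z /\ t = id z.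
  by split=> [ht|[z [hz ->]]]; first exists t.
split.
- elim=> [|x y _ hx _ hy|ps x _ IH hx hu].
  + by apply: (@lfp_closed _ _ _ _ [::]); [left; rewrite inE eqxx|apply: YieldsNil].
  + apply: (@lfp_closed _ _ _ _ [:: inl tt; inl tt]); first by left; rewrite !inE eqxx orbT.
    by rewrite -[y]cats0; do !constructor.
  + apply: (@lfp_closed _ _ _ _ (lpat id tt (map fst ps))); first by right; exists (map fst ps), x.
    rewrite -[lpat _ _ _]cats0 -[blocks ps]cats0.
    apply/(yields_lpat id (id_lang (lfp triv_rules tt))).
    exists ps; split=> //; exists [::].
      by rewrite /blocks; congr (_ ++ _); apply: eq_map => -[].
    exact: YieldsNil.
- move: tt w; apply: lfp_ind => j s w [|[cs [x [hx hu ->]]]].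
  + rewrite !inE => /orP [] /eqP -> hy.
      by rewrite (yields_nil hy); apply: TrivNil.
    have [u [w' [-> [hu hy']]]] := yields_nonterm hy.
    have [v [w'' [-> [hv /yields_nil ->]]]] := yields_nonterm hy'.
    by rewrite cats0; apply: TrivCat.
  + rewrite -[lpat _ _ _]cats0.
    move/(yields_lpat id (id_lang triv_word)).
    case=> ps [eps hps [w' -> /yields_nil ->]].
    rewrite cats0 (_ : flatten _ = blocks ps); last by apply: congr1; apply: eq_map => -[].
    by apply: TrivBlock hps _ hu; rewrite eps.
Qed.

Lemma cf_triv_word : context_free triv_word.
Proof. by apply: cf_ext (cf_lfp (fun _ => cf_triv_rules) tt) => w; rewrite triv_word_lfp. Qed.
Definition triv_side (b : bool) (t : seq (option C)) : Prop :=
  exists x, triv_word x /\ t = map Some (if b then rev x else x).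

(* The grammar of [matched], with nonterminals [None] for [matched] and
   [Some b] for [triv_side b]:
   S -> # | F S R | c1 F ... ck F S R d_l ... R d1 (for equal syllables). *)
Definition match_rules (j : option bool) (s : seq (option bool + option C)) : Prop :=
  if j is Some b then exists t, triv_side b t /\ s = map inr t
  else s \in [:: [:: inr None]; [:: inl (Some false); inl None; inl (Some true)]] \/
       exists cs ds x, [/\ syllable cs x, syllable ds x &
         s = lpat Some (Some false) cs ++ inl None :: rpat Some (Some true) (rev ds)].

(* Here equal syllables come from [WP(M)] and [WP(N)]. *)
Lemma cf_match_rules j : context_free (match_rules j).
Proof.
case: j => [b|].
  have cfb : context_free (fun t => triv_side b t).
    case: b; last by apply: cf_map cf_triv_word.
    apply: cf_ext (cf_map Some (cf_rev cf_triv_word)) => t.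
    by split=> [[x [hx ->]]|[x [hx ->]]]; exists (rev x); rewrite revK.
  by apply: cf_ext (cf_map inr cfb) => s; split=> [[t [ht ->]]|[t [ht ->]]]; exists t.
apply: cf_or; first exact: cf_finite.
apply: cf_ext (cf_or (cf_equal_words cfA (fun a => Some (inl a)) (Some false) None (Some true))
                     (cf_equal_words cfB (fun b => Some (inr b)) (Some false) None (Some true))).
move=> s; split.
- case=> [[al [bl [e ->]]]|[al [bl [e ->]]]].
    exists (map inl al), (map inl bl), (inl (meval gA al)).
    by split; [left; exists al|left; exists bl; rewrite e|rewrite lpat_map -map_rev rpat_map].
  exists (map inr al), (map inr bl), (inr (meval gB al)).
  by split; [right; exists al|right; exists bl; rewrite e|rewrite lpat_map -map_rev rpat_map].
- case=> cs [ds [x [[[al [-> ->]]|[al [-> ->]]] [[bl [-> e]]|[bl [-> e]]] ->]]] //.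
    by left; exists al, bl; case: e => ->; rewrite lpat_map -map_rev rpat_map.
  by right; exists al, bl; case: e => ->; rewrite lpat_map -map_rev rpat_map.
Qed.

Lemma rev_blocks (qs : seq (C * seq C)) : rev (map Some (blocks qs)) =
  flatten [seq map Some (rev p.2) ++ [:: Some p.1] | p <- rev qs].
Proof.
rewrite /blocks map_flatten rev_flatten -!map_comp map_rev; congr flatten.
by congr rev; apply: eq_map => -[c t] /=; rewrite rev_cons -cats1 map_rev.
Qed.

Lemma match_side b t : lfp match_rules (Some b) t <-> triv_side b t.
Proof. by apply: lfp_terminal. Qed.

Lemma matched_lfp_complete s : matched s -> lfp match_rules None s.
Proof.
have hF t : lfp match_rules (Some false) t <-> exists x, triv_word x /\ t = map Some x.
  exact: match_side false t.
have hR t : lfp match_rules (Some true) t <-> exists x, triv_word x /\ t = map Some (rev x).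
  exact: match_side true t.
elim=> [|x y s0 hx hy _ IH|ps qs x s0 hps hqs hpx hqx _ IH].
- apply: (@lfp_closed _ _ _ _ [:: inr None]); first by left; rewrite inE eqxx.
  by do !constructor.
- apply: (@lfp_closed _ _ _ _ [:: inl (Some false); inl None; inl (Some true)]).
    by left; rewrite !inE eqxx orbT.
  rewrite -[rev _]cats0; constructor; first by apply/hF; exists x.
  constructor=> //; constructor; last exact: YieldsNil.
  by apply/hR; exists y; rewrite map_rev.
- apply: (lfp_closed (s := lpat Some (Some false) (map fst ps) ++
                           inl None :: rpat Some (Some true) (rev (map fst qs)))).
    by right; exists (map fst ps), (map fst qs), x.
  apply/(yields_lpat Some hF); exists ps; split=> //; exists (s0 ++ rev (map Some (blocks qs))).
    by rewrite /blocks map_flatten -map_comp.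
  constructor=> //; apply/(yields_rpat Some hR); exists (rev qs); split.
  + by rewrite map_rev.
  + by move=> p; rewrite mem_rev; apply: hqs.
  + exact: rev_blocks.
Qed.

Definition match_sem (j : option bool) (w : seq (option C)) : Prop :=
  if j is Some b then triv_side b w else matched w.

Lemma lfp_match_sound j w : lfp match_rules j w -> match_sem j w.
Proof.
move: j w; apply: lfp_ind => -[b|] s w; first by case=> t [ht ->] /yields_terms ->.
case=> [|[cs [ds [x [hcs hds ->]]]]].
  rewrite !inE => /orP [] /eqP -> hy.
    by have [w' [-> /yields_nil ->]] := yields_term hy; apply: MatchHash.
  have [u [w1 [-> [[x [hx ->]] hy1]]]] := yields_nonterm hy.
  have [v [w2 [-> [hv hy2]]]] := yields_nonterm hy1.
  have [t [w3 [-> [[y [hy3 ->]] /yields_nil ->]]]] := yields_nonterm hy2.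
  by rewrite cats0 map_rev; apply: MatchPad.
have sF t : match_sem (Some false) t <-> exists z, triv_word z /\ t = map Some z by [].
have sR t : match_sem (Some true) t <-> exists z, triv_word z /\ t = map Some (rev z) by [].
case/(yields_lpat Some sF) => ps [eps hps [w' -> hy]].
have [v [w2 [-> [hv hy2]]]] := yields_nonterm hy.
case/(yields_rpat Some sR): hy2 => qs [eqs hqs ->].
have := MatchBlock (qs := rev qs) (x := x) hps _ _ _ hv.
rewrite rev_blocks revK /blocks map_flatten -map_comp; apply.
- by move=> p; rewrite mem_rev; apply: hqs.
- by rewrite eps; exact: hcs.
- by rewrite map_rev eqs revK; exact: hds.
Qed.

Lemma cf_matched : context_free matched.
Proof.
apply: cf_ext (cf_lfp cf_match_rules None) => s.
by split; [apply: lfp_match_sound|apply: matched_lfp_complete].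
Qed.
End CertifiedLanguages.

Lemma gP_generates (M N P : monoidT) (iM : M -> P) (iN : N -> P) (A B : finType)
  (gA : A -> M) (gB : B -> N) :
  is_free_product iM iN -> generates gA -> generates gB -> generates (gP iM iN gA gB).
Proof.
move=> fpP genA genB; have [hM [hN _]] := fpP.
apply: (free_product_ind fpP) => [|x y [u <-] [v <-]|m|n]; first by exists [::].
- by exists (u ++ v); rewrite meval_cat.
- by have [u <-] := genA m; exists (map inl u); rewrite meval_map hom_meval.
- by have [v <-] := genB n; exists (map inr v); rewrite meval_map hom_meval.
Qed.

Lemma UCF_free_product (M N P : monoidT) (iM : M -> P) (iN : N -> P) :
  is_free_product iM iN -> UCF M -> UCF N -> UCF P.
Proof.
move=> fpP [A [gA [genA cfA]]] [B [gB [genB cfB]]].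
exists (A + B)%type, (gP iM iN gA gB); split; first exact: gP_generates.
by apply: cf_ext (cf_matched cfA cfB) => s; rewrite (wp_matched fpP).
Qed.

Section Factor.
Variables (M P : monoidT) (iM : M -> P) (r : P -> M).
Hypotheses (hiM : is_hom iM) (hr : is_hom r) (rM : forall m, r (iM m) = m).
Variables (B : finType) (gB : B -> P).
Hypothesis genP : generates gB.

Definition gens_factor : finType := {b : B | ~~ isone (r (gB b))}.
Definition g_factor (a : gens_factor) : M := r (gB (proj1_sig a)).

Lemma g_factor_generates : generates g_factor.
Proof.
move=> m; have [w ew] := genP (iM m).
have -> : m = meval (fun b => r (gB b)) w by rewrite -hom_meval // ew rM.
elim: w {ew} => [|b w [u eu]] /=; first by exists [::].
case hb: (isone (r (gB b))); last by exists (exist _ b (negbT hb) :: u); rewrite /= eu.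
by exists u; move/isoneP: hb => ->; rewrite munitl.
Qed.

(* A word over [B] spelling each generator of [M] inside [P]; it is nonempty
   since the generator is not 1. *)
Definition spell (a : gens_factor) : seq B :=
  proj1_sig (constructive_indefinite_description _ (genP (iM (g_factor a)))).

Lemma spellE a : meval gB (spell a) = iM (g_factor a).
Proof. exact: proj2_sig (constructive_indefinite_description _ (genP (iM (g_factor a)))). Qed.

Lemma spell_nonempty a : spell a != [::].
Proof.
apply/eqP => e; have := proj2_sig a; rewrite -/(g_factor a) -(rM (g_factor a)) -spellE e.
by case: hr => -> _; case: isoneP.
Qed.

Lemma meval_spell u : meval gB (flatten (map spell u)) = iM (meval g_factor u).
Proof.
case: hiM => h1 h2.
by elim: u => [|a u IH] /=; rewrite ?h1 // meval_cat IH spellE h2.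
Qed.

(* The inverse image of [WP(P)]: generators tagged [false] (left of the
   marker) are spelled, those tagged [true] are spelled backwards. *)
Definition tagged_spell (x : option (bool * gens_factor)) : seq (option B) :=
  match x with
  | None => [:: None]
  | Some (false, a) => map Some (spell a)
  | Some (true, a) => rev (map Some (spell a))
  end.

Lemma tagged_spell_nonempty x : tagged_spell x != [::].
Proof.
case: x => [[[] a]|] //=; rewrite -?size_eq0 ?size_rev size_map size_eq0; exact: spell_nonempty.
Qed.

Lemma tagged_spell_word u v :
  flatten (map tagged_spell (map Some (map (pair false) u) ++ None :: map Some (map (pair true) v))) =
  map Some (flatten (map spell u)) ++ None :: rev (map Some (flatten (map spell (rev v)))).
Proof.
rewrite map_cat flatten_cat /= map_flatten -!map_comp; congr (flatten _ ++ None :: _).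
by rewrite map_flatten rev_flatten -!map_comp -map_rev revK.
Qed.

Lemma tags_false (U : seq (bool * gens_factor)) :
  all (fun p => ~~ p.1) U -> U = map (pair false) (map snd U).
Proof. by elim: U => [|[[] a] U IH] //= /IH e; congr (_ :: _). Qed.

Lemma tags_true (V : seq (bool * gens_factor)) :
  all (fun p => p.1) V -> V = map (pair true) (map snd V).
Proof. by elim: V => [|[[] a] V IH] //= /IH e; congr (_ :: _). Qed.

Lemma untag_pairs b (u : seq gens_factor) :
  flatten (map (fun p : bool * gens_factor => [:: Some p.2]) (map (pair b) u)) = map Some u.
Proof. by rewrite flatten_map1 -map_comp. Qed.

Lemma wp_factor s : word_problem g_factor s <-> exists U V,
  [/\ all (fun p => ~~ p.1) U, all (fun p => p.1) V,
      word_problem gB (flatten (map tagged_spell (map Some U ++ None :: map Some V))) &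
      s = flatten (map (fun p : bool * gens_factor => [:: Some p.2]) U) ++ [:: None] ++
          flatten (map (fun p : bool * gens_factor => [:: Some p.2]) V)].
Proof.
split.
- case=> u [v [-> euv]]; exists (map (pair false) u), (map (pair true) (rev v)).
  split; try by rewrite all_map; apply/allP.
    rewrite tagged_spell_word revK.
    by exists (flatten (map spell u)), (flatten (map spell v)); rewrite !meval_spell euv.
  by rewrite !untag_pairs map_rev.
- case=> U [V [/tags_false -> /tags_true -> + ->]]; rewrite !untag_pairs tagged_spell_word.
  case=> u0 [v0 [/split_marker [<- /(can_inj revK) /(inj_map (@Some_inj _)) <-] e]].
  exists (map snd U), (rev (map snd V)); rewrite map_rev revK; split=> //.
  by apply: (can_inj rM); rewrite -!meval_spell.
Qed.

Hypothesis cfP : context_free (word_problem gB).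

Lemma UCF_factor : UCF M.
Proof.
exists gens_factor, g_factor; split; first exact: g_factor_generates.
apply: cf_ext (cf_phase_hom _ _ _ _ _ (cf_inverse_hom tagged_spell_nonempty cfP)) => s.
by symmetry; apply: wp_factor.
Qed.
End Factor.

Lemma UCF_left (M N P : monoidT) (iM : M -> P) (iN : N -> P) :
  is_free_product iM iN -> UCF P -> UCF M.
Proof.
move=> fpP [B [gB [genP cfP]]]; have [r [hr rM _]] := free_product_retraction fpP.
have [hiM _] := fpP; exact: (@UCF_factor M P iM r hiM hr rM B gB genP cfP).
Qed.

Theorem mainTheorem10 (M N P : monoidT) (iM : M -> P) (iN : N -> P) :
  is_free_product iM iN -> (UCF P <-> UCF M /\ UCF N).
Proof.
move=> fpP; split; last by case; apply: UCF_free_product fpP.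
move=> hP; split; first exact: UCF_left fpP hP.
exact: UCF_left (free_product_sym fpP) hP.
Qed.
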